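(* Let $f:\mathbb{R}^n\to\mathbb{R}$ be differentiable and pseudo-convex, with $\nabla f$ $L$-Lipschitz continuous ($L>0$), and assume the stationary set $X^*$ is non-empty. Let $0<h<\frac{1}{L}$ and $\beta\in\left(\frac{1-\sqrt{1-h^2L^2}}{h^2L^2},1\right]$, and let $\{x^k\},\{z^k\}$ be generated by Algorithm 1 from an arbitrary $x^0\in\mathbb{R}^n$. Then for every $x^*\in X^*$ and every $k\ge 0$, $$\|x^{k+1}-x^*\|^2\le \|x^k-x^*\|^2-\kappa_1\|x^k-z^k\|^2,$$ where $\kappa_1=2\beta-1-\beta^2h^2L^2>0$.
   Context: A differentiable $f$ is pseudo-convex if $\nabla f$ is pseudo-monotone, i.e. for all $x,y$, $\langle \nabla f(x),y-x\rangle\ge 0$ implies $\langle \nabla f(y),y-x\rangle\ge0$. The stationary set is $X^*=\{x\in\mathbb{R}^n:\nabla f(x)=0\}$. Algorithm 1: given $x^0$, for $k=0,1,2,\dots$ set $z^k=x^k-h\nabla f(x^k)$ and $x^{k+1}=x^k-h\big(\nabla f(x^k)-\beta(\nabla f(x^k)-\nabla f(z^k))\big)$. *)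

From HB Require Import structures.
From mathcomp Require Import all_boot all_order all_algebra.
From mathcomp Require Import all_classical all_reals all_analysis.
Set Implicit Arguments. Unset Strict Implicit. Unset Printing Implicit Defensive.
Import Order.TTheory GRing.Theory Num.Theory.
Import numFieldNormedType.Exports.
Local Open Scope ring_scope.

Definition dotp {R : realType} {n : nat} (u v : 'rV[R]_n) : R :=
  \sum_(i < n) u 0 i * v 0 i.
Definition enorm {R : realType} {n : nat} (u : 'rV[R]_n) : R :=
  Num.sqrt (dotp u u).

Definition is_gradient {R : realType} {n : nat}
  (f : 'rV[R]_n -> R) (g : 'rV[R]_n -> 'rV[R]_n) : Prop :=
  forall x, differentiable f x /\ forall v, 'd f x v = dotp (g x) v.

Definition pseudo_monotone {R : realType} {n : nat} (g : 'rV[R]_n -> 'rV[R]_n) : Prop :=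
  forall x y, 0 <= dotp (g x) (y - x) -> 0 <= dotp (g y) (y - x).

Definition pseudo_convex {R : realType} {n : nat}
  (f : 'rV[R]_n -> R) (g : 'rV[R]_n -> 'rV[R]_n) : Prop :=
  is_gradient f g /\ pseudo_monotone g.

Definition lipschitz_with {R : realType} {n : nat} (L : R) (g : 'rV[R]_n -> 'rV[R]_n) : Prop :=
  forall x y, enorm (g x - g y) <= L * enorm (x - y).

Definition stationary_set {R : realType} {n : nat} (g : 'rV[R]_n -> 'rV[R]_n) : set 'rV[R]_n :=
  [set x | g x = 0].

Definition alg1_z {R : realType} {n : nat} (g : 'rV[R]_n -> 'rV[R]_n) (h : R)
  (x : 'rV[R]_n) : 'rV[R]_n := x - h *: g x.

Fixpoint alg1_x {R : realType} {n : nat} (g : 'rV[R]_n -> 'rV[R]_n) (h beta : R)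
  (x0 : 'rV[R]_n) (k : nat) : 'rV[R]_n :=
  match k with
  | O => x0
  | S k' => let xk := alg1_x g h beta x0 k' in
            xk - h *: (g xk - beta *: (g xk - g (alg1_z g h xk)))
  end.

(** Writing a = g x^k, b = g z^k and p = x^k - x*, the step is
   x^{k+1} - x* = p - h(1-β) a - hβ b.  Pseudo-monotonicity at the stationary
   point x* gives <a, p> >= 0 and <b, p - h a> >= 0, and expanding the square
   leaves ‖p‖² - h²(2β - 1) ‖a‖² + h²β² ‖a - b‖², where Lipschitz continuity
   bounds ‖a - b‖ by L ‖x^k - z^k‖ = hL ‖a‖.  The constant κ₁ is positive
   because β lies strictly between the roots (1 ± √(1 - h²L²))/(h²L²) of
   h²L² β² - 2β + 1. *)
From HB Require Import structures.
From mathcomp Require Import all_boot all_order all_algebra.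
From mathcomp Require Import all_classical all_reals all_analysis.
From mathcomp Require Import ring lra.
Set Implicit Arguments. Unset Strict Implicit. Unset Printing Implicit Defensive.
Import Order.TTheory GRing.Theory Num.Theory.
Local Open Scope ring_scope.
Local Open Scope classical_set_scope.

Section InnerProduct.
Variables (R : realType) (n : nat).
Implicit Types u v w : 'rV[R]_n.

Lemma dotpC u v : dotp u v = dotp v u.
Proof. by apply: eq_bigr => i _; rewrite mulrC. Qed.

Lemma dotp0l v : dotp 0 v = 0.
Proof. by rewrite /dotp big1 // => i _; rewrite mxE mul0r. Qed.

Lemma dotpBl u v w : dotp (u - v) w = dotp u w - dotp v w.
Proof. by rewrite /dotp -sumrB; apply: eq_bigr => i _; rewrite !mxE mulrBl. Qed.

Lemma dotpZl (a : R) u w : dotp (a *: u) w = a * dotp u w.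
Proof. by rewrite /dotp mulr_sumr; apply: eq_bigr => i _; rewrite !mxE mulrA. Qed.

Lemma dotpBr u v w : dotp w (u - v) = dotp w u - dotp w v.
Proof. by rewrite dotpC dotpBl !(dotpC w). Qed.

Lemma dotpZr (a : R) u w : dotp w (a *: u) = a * dotp w u.
Proof. by rewrite dotpC dotpZl dotpC. Qed.

Lemma dotp_ge0 u : 0 <= dotp u u.
Proof. by apply: sumr_ge0 => i _; rewrite -expr2 sqr_ge0. Qed.

Lemma enorm_ge0 u : 0 <= enorm u.
Proof. exact: sqrtr_ge0. Qed.

Lemma enorm_sqr u : enorm u ^+ 2 = dotp u u.
Proof. by rewrite /enorm sqr_sqrtr // dotp_ge0. Qed.

End InnerProduct.

Section Gradient.
Variables (R : realType) (n : nat) (g : 'rV[R]_n -> 'rV[R]_n).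

Lemma pseudo_monotone_stationary xs y :
  pseudo_monotone g -> g xs = 0 -> 0 <= dotp (g y) (y - xs).
Proof. by move=> gpm gxs0; apply: gpm; rewrite gxs0 dotp0l. Qed.

Lemma lipschitz_with_sqr (L : R) x y : 0 <= L -> lipschitz_with L g ->
  dotp (g x - g y) (g x - g y) <= L ^+ 2 * dotp (x - y) (x - y).
Proof.
move=> L0 glip; rewrite -!enorm_sqr -exprMn.
by rewrite ler_pXn2r ?nnegrE ?enorm_ge0 ?mulr_ge0 ?enorm_ge0.
Qed.

End Gradient.

Lemma quadratic_coef_gt0 (R : realType) (c beta : R) :
  0 < c < 1 -> (1 - Num.sqrt (1 - c)) / c < beta -> beta <= 1 ->
  0 < 2 * beta - 1 - beta ^+ 2 * c.
Proof.
move=> /andP[c0 c1]; rewrite ltr_pdivrMr // => beta_gt beta_le1.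
set s := Num.sqrt (1 - c) in beta_gt *.
have s_ge0 : 0 <= s by exact: sqrtr_ge0.
have s_sqr : s ^+ 2 = 1 - c by rewrite sqr_sqrtr // subr_ge0 ltW.
have lower_root : 0 < c * beta - 1 + s by rewrite mulrC; lra.
have upper_root : 0 < 1 + s - c * beta.
  have : c * beta <= c by rewrite ler_piMr // ltW.
  nra.
have : 0 < (c * beta - 1 + s) * (1 + s - c * beta) by rewrite mulr_gt0.
have -> : (c * beta - 1 + s) * (1 + s - c * beta)
    = c * (2 * beta - 1 - beta ^+ 2 * c).
  by transitivity (s ^+ 2 - (c * beta - 1) ^+ 2); [ring | rewrite s_sqr; ring].
by rewrite pmulr_rgt0.
Qed.

Section Alg1Step.
Variables (R : realType) (n : nat) (g : 'rV[R]_n -> 'rV[R]_n) (L h beta : R).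
Hypotheses (gpm : pseudo_monotone g) (L_ge0 : 0 <= L) (glip : lipschitz_with L g).
Hypotheses (h_ge0 : 0 <= h) (beta_ge0 : 0 <= beta) (beta_le1 : beta <= 1).

Lemma alg1_step_fejer x xs : g xs = 0 ->
  enorm (x - h *: (g x - beta *: (g x - g (alg1_z g h x))) - xs) ^+ 2
  <= enorm (x - xs) ^+ 2
     - (2 * beta - 1 - beta ^+ 2 * h ^+ 2 * L ^+ 2)
       * enorm (x - alg1_z g h x) ^+ 2.
Proof.
move=> gxs0; rewrite /alg1_z.
set a := g x; set b := g (x - h *: a); set p := x - xs.
have step_eq : x - h *: (a - beta *: (a - b)) - xs
    = p - (h * (1 - beta)) *: a - (h * beta) *: b.
  by apply/rowP => i; rewrite !mxE; ring.
have shift_eq : x - (x - h *: a) = h *: a.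
  by apply/rowP => i; rewrite !mxE; ring.
have ap_ge0 : 0 <= dotp a p by exact: pseudo_monotone_stationary.
have bpz_ge0 : 0 <= dotp b (p - h *: a).
  have -> : p - h *: a = (x - h *: a) - xs by apply/rowP => i; rewrite !mxE; ring.
  exact: pseudo_monotone_stationary.
have ab_lip := lipschitz_with_sqr x (x - h *: a) L_ge0 glip.
rewrite -/a -/b shift_eq in ab_lip.
clearbody p.
rewrite step_eq shift_eq !enorm_sqr.
move: bpz_ge0 ab_lip.
rewrite !(dotpBl, dotpBr, dotpZl, dotpZr) (dotpC b a) (dotpC p a) (dotpC p b).
set aa := dotp a a; set ab := dotp a b; set bb := dotp b b.
set ap := dotp a p; set bp := dotp b p; set pp := dotp p p.
move=> bpz_ge0 ab_lip.
have ap_term : 0 <= 2 * h * (1 - beta) * ap.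
  by rewrite !mulr_ge0 // subr_ge0.
have bp_term : 0 <= 2 * h * beta * (bp - h * ab) by rewrite !mulr_ge0.
have lip_term : h ^+ 2 * beta ^+ 2 * (aa - ab - ab + bb)
    <= h ^+ 2 * beta ^+ 2 * (L ^+ 2 * (h ^+ 2 * aa)).
  rewrite ler_wpM2l ?mulr_ge0 ?sqr_ge0 //.
  by move: ab_lip; congr (_ <= _); ring.
lra.
Qed.

End Alg1Step.

Theorem proposition1 (R : realType) (n : nat) (f : 'rV[R]_n -> R)
  (g : 'rV[R]_n -> 'rV[R]_n) (L h beta : R) (x0 : 'rV[R]_n) :
  pseudo_convex f g ->
  0 < L -> lipschitz_with L g ->
  stationary_set g !=set0 ->
  0 < h -> h < L^-1 ->
  (1 - Num.sqrt (1 - h ^+ 2 * L ^+ 2)) / (h ^+ 2 * L ^+ 2) < beta -> beta <= 1 ->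
  let kappa1 := 2 * beta - 1 - beta ^+ 2 * h ^+ 2 * L ^+ 2 in
  0 < kappa1 /\
  forall xs, xs \in stationary_set g -> forall k : nat,
    enorm (alg1_x g h beta x0 k.+1 - xs) ^+ 2
    <= enorm (alg1_x g h beta x0 k - xs) ^+ 2
       - kappa1 * enorm (alg1_x g h beta x0 k - alg1_z g h (alg1_x g h beta x0 k)) ^+ 2.
Proof.
move=> [_ gpm] L_gt0 glip _ h_gt0 hL_lt1 beta_gt beta_le1 kappa1.
have hL_bounds : 0 < h ^+ 2 * L ^+ 2 < 1.
  rewrite -exprMn exprn_gt0 ?mulr_gt0 //= expr_lt1 ?mulr_ge0 ?ltW //.
  by rewrite -(mulVf (lt0r_neq0 L_gt0)) ltr_pM2r.
have kappa1_gt0 : 0 < kappa1.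
  by rewrite /kappa1 -mulrA; exact: quadratic_coef_gt0 beta_gt beta_le1.
have beta_ge0 : 0 <= beta.
  have : 0 <= beta ^+ 2 * h ^+ 2 * L ^+ 2 by rewrite -!exprMn sqr_ge0.
  by move: kappa1_gt0; rewrite /kappa1; lra.
split=> // xs; rewrite inE => gxs0 k.
exact: (alg1_step_fejer gpm (ltW L_gt0) glip (ltW h_gt0) beta_ge0 beta_le1
  (alg1_x g h beta x0 k) gxs0).
Qed.
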